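(* Let $p>3$ be prime, $t\in\{1,3,p,3p\}$, and $1\le r\le 3p-1$ with $\gcd(r,3p)=1$. Then \[\Lambda(1,r,t)=\begin{cases}\emptyset & \text{if } r\equiv 1\pmod 3,\\ \{\ell\in\Delta(|r|_p): \ell\text{ odd}\} & \text{if } r\equiv 2\pmod 3.\end{cases}\]
   Context: $|r|_m$ is the multiplicative order of $r$ modulo $m$ (with $|r|_1=1$). $S_k(x):=1+x+\cdots+x^{k-1}$, $S_0:=0$. For $m\ge1$ with $\gcd(r,m)=1$, $\kappa(m,r,t):=\dfrac{m|r|_m}{\gcd(m,\,tS_{|r|_m}(r))}$. For $d\in\{1,3,p,3p\}$, $\Lambda(d,r,t):=\{\ell>0:\ \ell \text{ divides } \frac{|r|_{3p}}{\gcd(\kappa(d,r,t),|r|_{3p})}\text{ and }\gcd(r^{\ell\kappa(d,r,t)}-1,3p)=d\}$. For a positive integer $m$, $\Delta(m):=\{\ell: 0<\ell<m,\ \ell\mid m\}$ (proper positive divisors of $m$). *)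

From mathcomp Require Import all_boot.
Set Implicit Arguments. Unset Strict Implicit. Unset Printing Implicit Defensive.

(* |r|_m : multiplicative order of r modulo m, i.e. the least k >= 1 with
   r^k = 1 (mod m).  For gcd(r,m)=1 and m >= 1 this order is <= m, so it is
   found by searching k in 1..m.  For m = 1 this gives 1. *)
Definition ordm (m r : nat) : nat :=
  (find (fun k => r ^ k.+1 == 1 %[mod m]) (iota 0 m)).+1.

Definition Ssum (k x : nat) : nat := \sum_(i < k) x ^ i.

Definition kappa (m r t : nat) : nat :=
  (m * ordm m r) %/ gcdn m (t * Ssum (ordm m r) r).

Definition Lambda (p d r t l : nat) : bool :=
  [&& 0 < l,
      l %| ordm (3 * p) r %/ gcdn (kappa d r t) (ordm (3 * p) r)
    & gcdn (r ^ (l * kappa d r t) - 1) (3 * p) == d].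

Definition Delta (m l : nat) : bool := [&& 0 < l, l < m & l %| m].

From mathcomp Require Import all_boot.
From mathcomp Require Import cyclic.

(* Since kappa(1,r,t) = 1, an element l of Lambda(1,r,t) is a positive
   divisor of |r|_{3p} = lcm(|r|_3, |r|_p) with r^l - 1 prime to both 3 and p.
   Modulo 3, r^l = 1 for every l when r = 1 (mod 3), and exactly for even l
   when r = 2 (mod 3).  For odd l, dividing lcm(|r|_3, |r|_p) with |r|_3 | 2
   is dividing |r|_p, and then r^l <> 1 (mod p) says l is a proper divisor. *)

Lemma totient_leq n : totient n <= n.
Proof.
rewrite totient_count_coprime -[leqRHS](card_ord n) -sum1_card big_mkord.
by apply: leq_sum => i _; apply: leq_b1.
Qed.

Section MultiplicativeOrder.

Variables m r : nat.
Hypothesis (m_gt0 : 0 < m) (r_coprime : coprime r m).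

(* Euler's theorem puts a witness inside the range searched by [ordm]. *)
Let exists_unit_power : has (fun k => r ^ k.+1 == 1 %[mod m]) (iota 0 m).
Proof.
apply/hasP; exists (totient m).-1.
  by rewrite mem_iota add0n prednK ?totient_gt0 ?totient_leq.
by rewrite prednK ?totient_gt0 // Euler_exp_totient.
Qed.

Let find_unit_power_lt :
  find (fun k => r ^ k.+1 == 1 %[mod m]) (iota 0 m) < m.
Proof. by rewrite -[ltnRHS](size_iota 0 m) -has_find. Qed.

Lemma expn_ordm : r ^ ordm m r = 1 %[mod m].
Proof.
by have /eqP := nth_find 0 exists_unit_power; rewrite nth_iota ?add0n.
Qed.

Lemma expn_ordm_min s : 0 < s < ordm m r -> r ^ s != 1 %[mod m].
Proof.
case: s => // s; rewrite /ordm !ltnS => /andP[_ lt_s].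
have := before_find 0 lt_s.
by rewrite nth_iota ?add0n ?(ltn_trans lt_s find_unit_power_lt) // => ->.
Qed.

Lemma expn_modn_ordm k : r ^ k = r ^ (k %% ordm m r) %[mod m].
Proof.
rewrite {1}(divn_eq k (ordm m r)) expnD (mulnC (k %/ _)) expnM -modnMml.
by rewrite -modnXm expn_ordm modnXm exp1n modnMml mul1n.
Qed.

Lemma ordmP k : (r ^ k == 1 %[mod m]) = (ordm m r %| k).
Proof.
rewrite expn_modn_ordm /dvdn; have [->|k_gt0] := posnP (k %% ordm m r).
  by rewrite expn0 !eqxx.
apply: negbTE; apply: expn_ordm_min.
by rewrite k_gt0 ltn_mod.
Qed.

End MultiplicativeOrder.

Lemma ordm_mul a b r : 0 < a -> 0 < b -> coprime a b -> coprime r (a * b) ->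
  ordm (a * b) r = lcmn (ordm a r) (ordm b r).
Proof.
move=> a_gt0 b_gt0 co_ab; rewrite coprimeMr => /andP[co_ra co_rb].
have ab_gt0 : 0 < a * b by rewrite muln_gt0 a_gt0.
have ordm_abP k : (ordm (a * b) r %| k) = (lcmn (ordm a r) (ordm b r) %| k).
  by rewrite -ordmP ?coprimeMr ?co_ra // chinese_remainder // !ordmP // dvdn_lcm.
by apply/eqP; rewrite eqn_dvd ordm_abP dvdnn -ordm_abP dvdnn.
Qed.

Lemma kappa1 r t : kappa 1 r t = 1.
Proof. by rewrite /kappa /ordm /= !modn1 gcd1n. Qed.

Lemma Lambda1E p r t l :
  Lambda p 1 r t l = [&& 0 < l, l %| ordm (3 * p) r & coprime (r ^ l - 1) (3 * p)].
Proof. by rewrite /Lambda kappa1 gcd1n divn1 muln1. Qed.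

Lemma coprime_subn1_prime q x : prime q -> 0 < x ->
  coprime (x - 1) q = (x != 1 %[mod q]).
Proof.
by move=> q_pr x_gt0; rewrite coprime_sym prime_coprime // -eqn_mod_dvd.
Qed.

Lemma expn_mod3_1 r l : r %% 3 = 1 -> r ^ l = 1 %[mod 3].
Proof. by move=> r1; rewrite -modnXm r1 exp1n. Qed.

Lemma expn_mod3_2 r l : r %% 3 = 2 -> (r ^ l == 1 %[mod 3]) = ~~ odd l.
Proof.
move=> r2; have r_sq : r ^ 2 %% 3 = 1 by rewrite -modnXm r2.
rewrite -{1}(odd_double_half l) expnD -muln2 (mulnC l./2) expnM.
rewrite -modnMmr (expn_mod3_1 _ _ r_sq) modnMmr muln1 -modnXm r2.
by case: (odd l).
Qed.

Lemma odd_dvdn_lcm a b l : a %| 2 -> odd l -> (l %| lcmn a b) = (l %| b).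
Proof.
move=> a_dvd2 l_odd; apply/idP/idP => [l_dvd|]; last first.
  by move/dvdn_trans->; rewrite ?dvdn_lcmr.
rewrite -(@Gauss_dvdr l 2) ?coprimen2 // (dvdn_trans l_dvd) //.
by rewrite dvdn_lcm dvdn_mulr // dvdn_mull.
Qed.

Lemma proper_divisorE n d : 0 < n -> 0 < d -> d %| n -> (d < n) = ~~ (n %| d).
Proof.
move=> n_gt0 d_gt0 d_dvd; rewrite ltn_neqAle dvdn_leq // andbT.
by rewrite eqn_dvd d_dvd.
Qed.

Theorem lemma5p2 (p t r : nat) :
  prime p -> 3 < p ->
  t \in [:: 1; 3; p; 3 * p] ->
  1 <= r <= 3 * p - 1 -> coprime r (3 * p) ->
  (r %% 3 = 1 -> forall l : nat, ~~ Lambda p 1 r t l) /\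
  (r %% 3 = 2 -> forall l : nat, Lambda p 1 r t l = Delta (ordm p r) l && odd l).
Proof.
move=> p_pr p_gt3 _ /andP[r_gt0 _] co_r3p.
have co_3p : coprime 3 p by rewrite prime_coprime // dvdn_prime2 // ltn_eqF.
have /andP[co_r3 co_rp] : coprime r 3 && coprime r p by rewrite -coprimeMr.
have p_gt0 := prime_gt0 p_pr.
have LambdaE l : Lambda p 1 r t l = [&& 0 < l, l %| lcmn (ordm 3 r) (ordm p r),
    r ^ l != 1 %[mod 3] & ~~ (ordm p r %| l)].
  rewrite Lambda1E ordm_mul // coprimeMr !coprime_subn1_prime ?expn_gt0 ?r_gt0 //.
  by rewrite -ordmP.
split=> [r1 l | r2 l]; first by rewrite LambdaE expn_mod3_1 // eqxx !andbF.
rewrite LambdaE expn_mod3_2 // negbK /Delta.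
case: (posnP l) => [-> //| l_gt0]; case l_odd: (odd l); rewrite ?andbF //=.
have ordm3_dvd2 : ordm 3 r %| 2 by rewrite -ordmP // expn_mod3_2.
rewrite odd_dvdn_lcm //.
by case l_dvd: (l %| ordm p r); rewrite ?andbF // !andbT proper_divisorE.
Qed.
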